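(* Let $N$ be a positive integer, $h:=1/N$, $t_j:=jh$, and $e_n(t):=\exp(2\pi i n t)$. Then for every integer $n$ with $|n|\le N-1$ and every $t\in\mathbb R$ with $t/h\notin\mathbb Z$, \[ h\sum_{j=1}^{N}\cot(\pi(t-t_j))\,e_n(t_j)=\mathrm{p.v.}\int_0^1\cot(\pi(t-\tau))\,e_n(\tau)\,\mathrm d\tau+\cot(\pi t/h)\,e_n(t). \]
   Context: p.v. denotes the Cauchy principal value integral. *)

From Stdlib Require Import Reals.
From Coquelicot Require Import Coquelicot.
Open Scope R_scope.

Definition cot (x : R) : R := cos x / sin x.

Definition e_ (n : Z) (t : R) : C :=
  (cos (2 * PI * IZR n * t), sin (2 * PI * IZR n * t)).

Definition is_pv_integral (f : R -> C) (a b c : R) (L : C) : Prop :=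
  filterlim (fun eps => plus (@RInt C_R_CompleteNormedModule f a (c - eps)) (@RInt C_R_CompleteNormedModule f (c + eps) b))
            (at_right 0) (locally L).

(* the singular point uses Stdlib's frac_part t = t - IZR (Int_part t) in [0,1) *)

From Stdlib Require Import Reals Lra Lia.
From Coquelicot Require Import Coquelicot.
Open Scope R_scope.

(* Write n = s p with s = 1 or -1 and p = |n| < N.  Halving the angle shows
   cot (PI (t - x)) (e_s x - e_s t) = - i s (e_s t + e_s x), and telescoping gives
   cot (PI (t - x)) e_n x = e_n t cot (PI (t - x)) - i s Q x for a trigonometric polynomial Q
   with frequencies s k, 0 <= k <= p.  As p < N, the grid average and the integral over [0, 1]
   agree on Q.  On the cotangent they differ: its principal value vanishes, because the primitive
   - ln (sin^2 (PI (t - x))) / (2 PI) is symmetric about the singularity and 1-periodic, while its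
   grid average is cot (PI t N), by the same identity for p = N, where the grid average also sees
   the frequency N. *)

(* [ring] for equations in [C] stated through Coquelicot's structures over [C] ([plus], [RInt], ...),
   whose carrier [ring] does not recognise *)
Ltac ring_C :=
  change plus with Cplus;
  repeat match goal with |- context [@RInt C_R_CompleteNormedModule ?f ?a ?b] =>
    generalize (@RInt C_R_CompleteNormedModule f a b : C); intro end;
  match goal with |- ?x = ?y => change (@eq C x y) end;
  ring.

(** * The exponentials [e_] *)

Lemma e_freq_plus (a b : Z) (x : R) : e_ (a + b) x = (e_ a x * e_ b x)%C.
Proof.
  unfold e_; rewrite plus_IZR.
  replace (2 * PI * (IZR a + IZR b) * x) with (2 * PI * IZR a * x + 2 * PI * IZR b * x) by ring.
  rewrite cos_plus, sin_plus; apply injective_projections; simpl; ring.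
Qed.

Lemma e_arg_plus (a : Z) (x y : R) : e_ a (x + y) = (e_ a x * e_ a y)%C.
Proof.
  unfold e_.
  replace (2 * PI * IZR a * (x + y)) with (2 * PI * IZR a * x + 2 * PI * IZR a * y) by ring.
  rewrite cos_plus, sin_plus; apply injective_projections; simpl; ring.
Qed.

Lemma e_eq_1 (a m : Z) (x : R) : IZR a * x = IZR m -> e_ a x = 1%C.
Proof.
  intros Hm; unfold e_.
  replace (2 * PI * IZR a * x) with (IZR (2 * m) * PI) by (rewrite mult_IZR, <- Hm; simpl; ring).
  rewrite sin_eq_0_1 by eauto.
  replace (IZR (2 * m) * PI) with (2 * (IZR m * PI)) by (rewrite mult_IZR; simpl; ring).
  rewrite cos_2a_sin, sin_eq_0_1 by eauto.
  apply injective_projections; simpl; ring.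
Qed.

Lemma e_freq_0 (x : R) : e_ 0 x = 1%C.
Proof. apply (e_eq_1 0 0); ring. Qed.

Lemma e_freq_succ (s : Z) (p : nat) (x : R) :
  e_ (s * Z.of_nat (S p)) x = (e_ s x * e_ (s * Z.of_nat p) x)%C.
Proof. rewrite <- e_freq_plus; f_equal; lia. Qed.

Lemma sin_PI_eq_0 (y : R) : sin (PI * y) = 0 -> exists k : Z, y = IZR k.
Proof.
  intros H; destruct (sin_eq_0_0 _ H) as [k Hk]; exists k.
  pose proof PI_RGT_0; apply Rmult_eq_reg_l with PI; lra.
Qed.

Lemma e_eq_1_inv (a : Z) (x : R) : e_ a x = 1%C -> exists m : Z, IZR a * x = IZR m.
Proof.
  intros He; apply (f_equal fst) in He; simpl in He.
  replace (2 * PI * IZR a * x) with (2 * (PI * (IZR a * x))) in He by ring.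
  rewrite cos_2a_sin in He.
  apply sin_PI_eq_0; nra.
Qed.

Lemma continuous_C (f : R -> C) (x : R) :
  continuous (fun y => fst (f y)) x -> continuous (fun y => snd (f y)) x -> continuous f x.
Proof.
  intros H1 H2; apply filterlim_locally; intros eps.
  apply filterlim_locally with (eps := eps) in H1.
  apply filterlim_locally with (eps := eps) in H2.
  generalize (filter_and _ _ H1 H2); apply filter_imp; intros y [Ha Hb]; split; auto.
Qed.

Lemma continuous_Cmult (f g : R -> C) (x : R) :
  continuous f x -> continuous g x -> continuous (fun y => (f y * g y)%C) x.
Proof.
  intros Hf Hg.
  assert (Hparts : forall h : R -> C, continuous h x ->
            continuity_pt (fun y => fst (h y)) x /\ continuity_pt (fun y => snd (h y)) x).
  { intros h Hh; split; apply continuity_pt_filterlim.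
    - apply (continuous_comp h fst); [exact Hh | apply continuous_fst].
    - apply (continuous_comp h snd); [exact Hh | apply continuous_snd]. }
  destruct (Hparts f Hf) as [Hf1 Hf2]; destruct (Hparts g Hg) as [Hg1 Hg2].
  apply continuous_C; simpl; apply continuity_pt_filterlim.
  - apply continuity_pt_minus; apply continuity_pt_mult; auto.
  - apply continuity_pt_plus; apply continuity_pt_mult; auto.
Qed.

Lemma continuous_Cmult_l (c : C) (f : R -> C) (x : R) :
  continuous f x -> continuous (fun y => (c * f y)%C) x.
Proof. apply continuous_Cmult, continuous_const. Qed.

Lemma continuous_e (a : Z) (x : R) : continuous (e_ a) x.
Proof.
  apply continuous_C; unfold e_; simpl;
    apply (ex_derive_continuous (K := R_AbsRing) (V := R_NormedModule)); auto_derive; auto.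
Qed.

Lemma is_RInt_C (f : R -> C) (a b : R) (u v : R) :
  is_RInt (fun y => fst (f y)) a b u -> is_RInt (fun y => snd (f y)) a b v -> is_RInt f a b (u, v).
Proof. apply is_RInt_fct_extend_pair. Qed.

Lemma is_RInt_Cmult_l (c : C) (f : R -> C) (a b : R) (v : C) :
  is_RInt f a b v -> is_RInt (fun y => (c * f y)%C) a b (c * v)%C.
Proof.
  intros H.
  pose proof (is_RInt_fct_extend_fst f a b v H) as H1.
  pose proof (is_RInt_fct_extend_snd f a b v H) as H2.
  apply is_RInt_C; simpl.
  - apply (is_RInt_minus (V := R_NormedModule)); apply (is_RInt_scal (V := R_NormedModule)); auto.
  - apply (is_RInt_plus (V := R_NormedModule)); apply (is_RInt_scal (V := R_NormedModule)); auto.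
Qed.

Lemma is_RInt_R0 (a b : R) : is_RInt (fun _ => 0) a b 0.
Proof.
  pose proof (is_RInt_const (V := R_NormedModule) a b 0) as H.
  unfold scal in H; simpl in H; unfold mult in H; simpl in H.
  rewrite Rmult_0_r in H; exact H.
Qed.

Lemma is_RInt_RtoC (f : R -> R) (a b v : R) :
  is_RInt f a b v -> is_RInt (fun y => RtoC (f y)) a b (RtoC v).
Proof. intros H; apply is_RInt_C; [exact H | apply is_RInt_R0]. Qed.

Lemma is_RInt_e (k : Z) : is_RInt (e_ k) 0 1 (if (k =? 0)%Z then RtoC 1 else RtoC 0).
Proof.
  destruct (Z.eqb_spec k 0) as [-> | Hk].
  - apply (is_RInt_ext (fun _ => RtoC 1)); [intros; symmetry; apply e_freq_0 |].
    apply is_RInt_RtoC.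
    pose proof (is_RInt_const (V := R_NormedModule) 0 1 1) as H.
    unfold scal in H; simpl in H; unfold mult in H; simpl in H.
    rewrite Rminus_0_r, Rmult_1_r in H; exact H.
  - set (w := 2 * PI * IZR k).
    assert (Hw : w <> 0).
    { pose proof PI_RGT_0; apply not_0_IZR in Hk; unfold w; apply Rmult_integral_contrapositive; lra. }
    assert (H1 : e_ k 1 = 1%C) by (apply (e_eq_1 k k); ring).
    unfold e_ in H1; rewrite Rmult_1_r in H1; fold w in H1.
    pose proof (f_equal fst H1) as Hc; pose proof (f_equal snd H1) as Hs; simpl in Hc, Hs.
    apply is_RInt_C; unfold e_; simpl; fold w.
    + assert (HI : is_RInt (fun x => cos (w * x)) 0 1 (sin (w * 1) / w - sin (w * 0) / w)).
      { apply (is_RInt_derive (V := R_CompleteNormedModule) (fun x => sin (w * x) / w)); intros x _.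
        - auto_derive; auto; field; auto.
        - apply (ex_derive_continuous (K := R_AbsRing) (V := R_NormedModule)); auto_derive; auto. }
      rewrite Rmult_1_r, Rmult_0_r, sin_0, Hs in HI.
      rewrite Rminus_diag in HI; exact HI.
    + assert (HI : is_RInt (fun x => sin (w * x)) 0 1 (- cos (w * 1) / w - - cos (w * 0) / w)).
      { apply (is_RInt_derive (V := R_CompleteNormedModule) (fun x => - cos (w * x) / w)); intros x _.
        - auto_derive; auto; field; auto.
        - apply (ex_derive_continuous (K := R_AbsRing) (V := R_NormedModule)); auto_derive; auto. }
      rewrite Rmult_1_r, Rmult_0_r, cos_0, Hc in HI.
      rewrite Rminus_diag in HI; exact HI.
Qed.

(** * Averages over the grid [j / N] *)

Lemma sum_n_m_Cplus (f g : nat -> C) (a b : nat) :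
  sum_n_m (fun j => (f j + g j)%C) a b = (sum_n_m f a b + sum_n_m g a b)%C.
Proof. exact (sum_n_m_plus (G := C_AbelianMonoid) f g a b). Qed.

Lemma sum_n_m_Cmult_l (c : C) (f : nat -> C) (a b : nat) :
  sum_n_m (fun j => (c * f j)%C) a b = (c * sum_n_m f a b)%C.
Proof. exact (sum_n_m_mult_l (K := C_Ring) c f a b). Qed.

Lemma sum_n_m_Cext (f g : nat -> C) (a b : nat) :
  (forall j, f j = g j) -> sum_n_m f a b = sum_n_m g a b.
Proof. intros H; apply sum_n_m_ext; exact H. Qed.

Lemma sum_n_m_C1 (N : nat) : sum_n_m (fun _ => RtoC 1) 1 N = RtoC (INR N).
Proof.
  induction N as [|N IH]; [rewrite sum_n_m_zero; [reflexivity | lia] |].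
  rewrite sum_n_Sm, IH, S_INR by lia.
  apply injective_projections; simpl; ring.
Qed.

Lemma sum_n_m_geometric_cycle (g : nat -> C) (w : C) (N : nat) :
  (1 <= N)%nat -> (forall j, g (S j) = (w * g j)%C) -> g (S N) = g 1%nat -> w <> RtoC 1 ->
  sum_n_m g 1 N = RtoC 0.
Proof.
  intros HN Hg Hcycle Hw.
  assert (Hshift : (w * sum_n_m g 1 N)%C = sum_n_m g 1 N).
  { rewrite <- sum_n_m_Cmult_l, (sum_n_m_ext _ (fun j => g (S j))) by (intros; auto).
    rewrite sum_n_m_S.
    pose proof (sum_Sn_m g 1 (S N) ltac:(lia)) as E1.
    rewrite (sum_n_Sm g 1 N ltac:(lia)), Hcycle in E1.
    change plus with Cplus in E1.
    replace (sum_n_m g 2 (S N)) with (g 1%nat + sum_n_m g 2 (S N) - g 1%nat)%C by ring.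
    rewrite <- E1; ring. }
  assert (Hw1 : (w - 1)%C <> RtoC 0).
  { intros H; apply Hw; replace w with ((w - 1) + 1)%C by ring; rewrite H; ring. }
  set (S := sum_n_m g 1 N : C) in *.
  change (@eq C S (RtoC 0)).
  transitivity (/ (w - 1) * (w * S - S))%C; [field; auto | rewrite Hshift; ring].
Qed.

Definition grid_avg (N : nat) (f : R -> C) : C :=
  Cmult (RtoC (/ INR N)) (sum_n_m (fun j => f (INR j / INR N)) 1 N).

Lemma grid_avg_plus (N : nat) (f g : R -> C) :
  grid_avg N (fun x => f x + g x)%C = (grid_avg N f + grid_avg N g)%C.
Proof. unfold grid_avg; rewrite sum_n_m_Cplus; ring. Qed.

Lemma grid_avg_Cmult_l (N : nat) (c : C) (f : R -> C) :
  grid_avg N (fun x => c * f x)%C = (c * grid_avg N f)%C.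
Proof. unfold grid_avg; rewrite sum_n_m_Cmult_l; ring. Qed.

Lemma grid_avg_ext (N : nat) (f g : R -> C) :
  (forall j : nat, f (INR j / INR N) = g (INR j / INR N)) -> grid_avg N f = grid_avg N g.
Proof. intros H; unfold grid_avg; f_equal; apply sum_n_m_Cext; intros; apply H. Qed.

Lemma grid_avg_e (N : nat) (k : Z) : (0 < N)%nat ->
  grid_avg N (e_ k) = if (k mod Z.of_nat N =? 0)%Z then RtoC 1 else RtoC 0.
Proof.
  intros HN; pose proof (lt_0_INR N HN) as HNpos; unfold grid_avg.
  destruct (Z.eqb_spec (k mod Z.of_nat N) 0) as [Hdiv | Hndiv].
  - apply Z.mod_divide in Hdiv as [q ->]; [| lia].
    rewrite (sum_n_m_ext _ (fun _ => RtoC 1)), sum_n_m_C1.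
    + apply injective_projections; simpl; field; lra.
    + intros j; apply (e_eq_1 _ (q * Z.of_nat j)).
      rewrite !mult_IZR, <- !INR_IZR_INZ; field; lra.
  - rewrite (sum_n_m_geometric_cycle _ (e_ k (/ INR N))); try lia.
    + apply injective_projections; simpl; ring.
    + intros j; rewrite Cmult_comm, <- e_arg_plus; f_equal; rewrite S_INR; field; lra.
    + replace (INR (S N) / INR N) with (1 + 1 / INR N) by (rewrite S_INR; field; lra).
      rewrite e_arg_plus, (e_eq_1 k k 1), Cmult_1_l by ring; reflexivity.
    + intros Hw; apply e_eq_1_inv in Hw as [m Hm]; apply Hndiv, Z.mod_divide; [lia |].
      exists m; apply eq_IZR; rewrite mult_IZR, <- INR_IZR_INZ, <- Hm; field; lra.
Qed.

(** * The trigonometric polynomial [cot_poly] *)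

Lemma cot_mul_e_sub (s : Z) (t x : R) : (s = 1 \/ s = -1)%Z -> sin (PI * (t - x)) <> 0 ->
  (RtoC (cot (PI * (t - x))) * (e_ s x - e_ s t) = - Ci * RtoC (IZR s) * (e_ s t + e_ s x))%C.
Proof.
  intros Hs Hsin.
  set (m := (t + x) / 2); set (d := (t - x) / 2).
  assert (Ht : e_ s t = (e_ s m * e_ s d)%C) by (rewrite <- e_arg_plus; f_equal; unfold m, d; field).
  assert (Hx : e_ s x = (e_ s m * e_ s (- d))%C) by (rewrite <- e_arg_plus; f_equal; unfold m, d; field).
  (* factor out e_s((t+x)/2): what remains only involves the half-difference *)
  assert (Hd : (RtoC (cot (PI * (t - x))) * (e_ s (- d) - e_ s d)
                = - Ci * RtoC (IZR s) * (e_ s d + e_ s (- d)))%C).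
  { unfold e_, cot.
    replace (2 * PI * IZR s * d) with (IZR s * (PI * (t - x))) by (unfold d; field).
    replace (2 * PI * IZR s * - d) with (- (IZR s * (PI * (t - x)))) by (unfold d; field).
    set (th := PI * (t - x)) in *.
    destruct Hs as [-> | ->]; [rewrite Rmult_1_l | replace (IZR (-1) * th) with (- th) by (simpl; ring)];
      rewrite ?Ropp_involutive, ?cos_neg, ?sin_neg;
      apply injective_projections; simpl; field; auto. }
  rewrite Ht, Hx.
  transitivity (e_ s m * (RtoC (cot (PI * (t - x))) * (e_ s (- d) - e_ s d)))%C; [ring |].
  rewrite Hd; ring.
Qed.

(* [cot_poly s t p] is the trigonometric polynomial, with frequencies [s * k] for [0 <= k <= p],
   obtained by dividing [cot (PI * (t - x)) * (e_(s p) x - e_(s p) t)] by [- i s]. *)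
Fixpoint cot_poly (s : Z) (t : R) (p : nat) (x : R) : C :=
  match p with
  | O => RtoC 0
  | S p => (e_ s x * cot_poly s t p x + e_ (s * Z.of_nat p) t * (e_ s t + e_ s x))%C
  end.

Lemma cot_mul_e_sub_poly (s : Z) (t x : R) (p : nat) :
  (s = 1 \/ s = -1)%Z -> sin (PI * (t - x)) <> 0 ->
  (RtoC (cot (PI * (t - x))) * (e_ (s * Z.of_nat p) x - e_ (s * Z.of_nat p) t)
   = - Ci * RtoC (IZR s) * cot_poly s t p x)%C.
Proof.
  intros Hs Hsin; induction p as [| p IH].
  - simpl; rewrite Z.mul_0_r, !e_freq_0; ring.
  - rewrite !e_freq_succ; simpl cot_poly.
    set (c := RtoC (cot (PI * (t - x)))) in *.
    transitivity (e_ s x * (c * (e_ (s * Z.of_nat p) x - e_ (s * Z.of_nat p) t))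
                  + e_ (s * Z.of_nat p) t * (c * (e_ s x - e_ s t)))%C; [ring |].
    rewrite IH; unfold c; rewrite cot_mul_e_sub by auto; ring.
Qed.

Lemma cot_mul_e (s : Z) (t x : R) (p : nat) : (s = 1 \/ s = -1)%Z -> sin (PI * (t - x)) <> 0 ->
  (RtoC (cot (PI * (t - x))) * e_ (s * Z.of_nat p) x
   = e_ (s * Z.of_nat p) t * RtoC (cot (PI * (t - x))) + - Ci * RtoC (IZR s) * cot_poly s t p x)%C.
Proof. intros Hs Hx; rewrite <- cot_mul_e_sub_poly by auto; ring. Qed.

Lemma continuous_cot_poly (s : Z) (t : R) (p : nat) (x : R) : continuous (cot_poly s t p) x.
Proof.
  induction p as [| p IH]; [apply continuous_const |].
  apply (continuous_plus (V := C_NormedModule)).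
  - apply continuous_Cmult; [apply continuous_e | exact IH].
  - apply continuous_Cmult_l, (continuous_plus (V := C_NormedModule));
      [apply continuous_const | apply continuous_e].
Qed.

Section LinearFunctionalOnCotPoly.

(* A linear functional on [R -> C], as a relation so that [is_RInt] is an instance. *)
Variable L : (R -> C) -> C -> Prop.
Hypothesis L_plus : forall f g u v, L f u -> L g v -> L (fun x => f x + g x)%C (u + v)%C.
Hypothesis L_scal : forall c f u, L f u -> L (fun x => c * f x)%C (c * u)%C.
Hypothesis L_ext : forall f g u v, (forall x, f x = g x) -> u = v -> L f u -> L g v.

(* [alpha] is the weight given to the frequency [s N]: 0 for the integral over [0, 1],
   1 for the grid average, where it aliases to the constant term. *)
Variables (N : nat) (alpha : C) (s : Z) (t : R).
Hypothesis L_e : forall m : nat, (m <= N)%nat ->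
  L (e_ (s * Z.of_nat m))
    ((if (m =? 0)%nat then RtoC 1 else RtoC 0) + (if (m =? N)%nat then alpha else RtoC 0))%C.

(* generalised over the shift [k] so that the induction can follow the recursion of [cot_poly] *)
Lemma L_e_mul_cot_poly (p k : nat) : (1 <= p)%nat -> (k + p <= N)%nat ->
  L (fun x => e_ (s * Z.of_nat k) x * cot_poly s t p x)%C
    ((if (k =? 0)%nat then e_ (s * Z.of_nat p) t else RtoC 0)
     + (if (k + p =? N)%nat then alpha else RtoC 0))%C.
Proof.
  revert k; induction p as [| p IH]; intros k Hp HkpN; [lia |].
  destruct (Nat.eq_dec p 0) as [-> | Hp0].
  - eapply L_ext;
      [| | exact (L_plus _ _ _ _ (L_scal (e_ s t) _ _ (L_e k ltac:(lia))) (L_e (S k) ltac:(lia)))].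
    + intros x; cbn [cot_poly]; rewrite e_freq_succ, Z.mul_0_r, e_freq_0; ring.
    + rewrite Z.mul_1_r.
      destruct (Nat.eqb_spec k 0), (Nat.eqb_spec k N), (Nat.eqb_spec (S k) 0), (Nat.eqb_spec (S k) N),
        (Nat.eqb_spec (k + 1) N); try lia; ring.
  - eapply L_ext; [| | exact (L_plus _ _ _ _
        (L_plus _ _ _ _ (IH (S k) ltac:(lia) ltac:(lia))
                        (L_scal (e_ (s * Z.of_nat p) t * e_ s t) _ _ (L_e k ltac:(lia))))
        (L_scal (e_ (s * Z.of_nat p) t) _ _ (L_e (S k) ltac:(lia))))].
    + intros x; cbn [cot_poly]; rewrite (e_freq_succ s k); ring.
    + rewrite e_freq_succ.
      destruct (Nat.eqb_spec k 0), (Nat.eqb_spec k N), (Nat.eqb_spec (S k) 0), (Nat.eqb_spec (S k) N),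
        (Nat.eqb_spec (S k + p) N), (Nat.eqb_spec (k + S p) N); try lia; ring.
Qed.

Lemma L_cot_poly (p : nat) : (1 <= p <= N)%nat ->
  L (cot_poly s t p) (e_ (s * Z.of_nat p) t + (if (p =? N)%nat then alpha else RtoC 0))%C.
Proof.
  intros Hp; eapply L_ext; [| | exact (L_e_mul_cot_poly p 0 ltac:(lia) ltac:(lia))].
  - intros x; rewrite Z.mul_0_r, e_freq_0; ring.
  - reflexivity.
Qed.

End LinearFunctionalOnCotPoly.

Lemma is_RInt_cot_poly (s : Z) (t : R) (p : nat) : s <> 0%Z ->
  is_RInt (cot_poly s t p) 0 1 (if (p =? 0)%nat then RtoC 0 else e_ (s * Z.of_nat p) t).
Proof.
  intros Hs; destruct (Nat.eqb_spec p 0) as [-> | Hp].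
  - apply (is_RInt_ext (fun _ => RtoC 0)); [reflexivity |].
    apply is_RInt_RtoC, is_RInt_R0.
  - replace (e_ (s * Z.of_nat p) t) with (e_ (s * Z.of_nat p) t + (if (p =? p)%nat then RtoC 0 else RtoC 0))%C
      by (rewrite Nat.eqb_refl; ring).
    apply (L_cot_poly (fun f v => is_RInt f 0 1 v)); try lia.
    + intros f g u v; apply (is_RInt_plus (V := C_R_NormedModule)).
    + intros c f u; apply is_RInt_Cmult_l.
    + intros f g u v Hfg <- Hf; eapply is_RInt_ext; [intros; apply Hfg | exact Hf].
    + intros m _; match goal with |- is_RInt _ _ _ ?v => replace v with
        (if (s * Z.of_nat m =? 0)%Z then RtoC 1 else RtoC 0); [apply is_RInt_e |] end.
      destruct (Nat.eqb_spec m 0), (Z.eqb_spec (s * Z.of_nat m) 0), (Nat.eqb_spec m p); try nia; ring.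
Qed.

Lemma grid_avg_cot_poly (N : nat) (s : Z) (t : R) (p : nat) :
  (s = 1 \/ s = -1)%Z -> (0 < N)%nat -> (p <= N)%nat ->
  grid_avg N (cot_poly s t p)
  = ((if (p =? 0)%nat then RtoC 0 else e_ (s * Z.of_nat p) t) + (if (p =? N)%nat then RtoC 1 else RtoC 0))%C.
Proof.
  intros Hs HN HpN; destruct (Nat.eqb_spec p 0) as [-> | Hp].
  - destruct (Nat.eqb_spec 0 N); [lia |].
    unfold grid_avg; rewrite (sum_n_m_ext _ (fun _ => zero)), sum_n_m_const_zero by reflexivity.
    apply injective_projections; simpl; ring.
  - apply (L_cot_poly (fun f v => grid_avg N f = v)); try lia.
    + intros f g u v <- <-; apply grid_avg_plus.
    + intros c f u <-; apply grid_avg_Cmult_l.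
    + intros f g u v Hfg <- <-; symmetry; apply grid_avg_ext; intros; apply Hfg.
    + intros m Hm; rewrite grid_avg_e by auto.
      destruct (Z.eqb_spec ((s * Z.of_nat m) mod Z.of_nat N) 0) as [Hdiv | Hndiv];
        [apply Z.mod_divide in Hdiv as [q Hq]; [| lia] |];
        destruct (Nat.eqb_spec m 0), (Nat.eqb_spec m N); try ring.
      all: exfalso; try lia.
      * destruct (Z.lt_trichotomy q 0) as [Hq0 | [Hq0 | Hq0]]; destruct Hs; subst; nia.
      * apply Hndiv; subst m; rewrite Z.mul_0_r; reflexivity.
      * apply Hndiv; subst m; apply Z.mod_mul; lia.
Qed.

Lemma sin_PI_sub_grid_neq_0 (N j : nat) (t : R) : (0 < N)%nat -> (forall k : Z, t * INR N <> IZR k) ->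
  sin (PI * (t - INR j / INR N)) <> 0.
Proof.
  intros HN Ht E; pose proof (lt_0_INR N HN).
  apply sin_PI_eq_0 in E as [k Hk]; apply (Ht (k * Z.of_nat N + Z.of_nat j)%Z).
  rewrite plus_IZR, mult_IZR, <- !INR_IZR_INZ, <- Hk; field; lra.
Qed.

Lemma grid_avg_cot (N : nat) (t : R) : (0 < N)%nat -> (forall k : Z, t * INR N <> IZR k) ->
  grid_avg N (fun x => RtoC (cot (PI * (t - x)))) = RtoC (cot (PI * (t * INR N))).
Proof.
  intros HN Ht; pose proof (lt_0_INR N HN) as HNpos.
  set (W := e_ (1 * Z.of_nat N) t).
  (* the cotangent at t N satisfies the same linear equation as the average, by [cot_mul_e_sub] at x = 0 *)
  assert (Hcot : (RtoC (cot (PI * (t * INR N))) * (RtoC 1 - W) = - Ci * RtoC (IZR 1) * (W + RtoC 1))%C).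
  { assert (Hsin : sin (PI * (t * INR N - 0)) <> 0).
    { rewrite Rminus_0_r; intros E; apply sin_PI_eq_0 in E as [k Hk]; exact (Ht k Hk). }
    pose proof (cot_mul_e_sub 1 (t * INR N) 0 (or_introl eq_refl) Hsin) as H.
    rewrite Rminus_0_r, (e_eq_1 1 0) in H by ring.
    replace (e_ 1 (t * INR N)) with W in H
      by (unfold W, e_; rewrite Z.mul_1_l, <- INR_IZR_INZ; f_equal; f_equal; simpl; ring).
    rewrite H; ring. }
  assert (Havg : (grid_avg N (fun x => RtoC (cot (PI * (t - x)))) * (RtoC 1 - W)
                  = - Ci * RtoC (IZR 1) * (W + RtoC 1))%C).
  { pose proof (grid_avg_cot_poly N 1 t N (or_introl eq_refl) HN (le_n N)) as HQ.
    destruct (Nat.eqb_spec N 0); [lia |]; rewrite Nat.eqb_refl in HQ; fold W in HQ.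
    rewrite (Cmult_comm (grid_avg _ _)), <- grid_avg_Cmult_l, <- HQ, <- grid_avg_Cmult_l.
    apply grid_avg_ext; intros j.
    rewrite <- cot_mul_e_sub_poly by (auto; apply sin_PI_sub_grid_neq_0; auto).
    rewrite (e_eq_1 _ (Z.of_nat j)) by (rewrite mult_IZR, <- !INR_IZR_INZ; simpl; field; lra).
    fold W; ring. }
  assert (HW : (RtoC 1 - W)%C <> RtoC 0).
  { intros E; rewrite E, Cmult_0_r in Hcot.
    replace W with (RtoC 1) in Hcot by (replace W with (RtoC 1 - (RtoC 1 - W))%C by ring; rewrite E; ring).
    apply (f_equal snd) in Hcot; simpl in Hcot; lra. }
  transitivity (grid_avg N (fun x => RtoC (cot (PI * (t - x)))) * (RtoC 1 - W) / (RtoC 1 - W))%C;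
    [field; exact HW | rewrite Havg, <- Hcot; field; exact HW].
Qed.

(** * Principal values *)

Lemma at_right_0_lt (r : R) : 0 < r -> at_right 0 (fun eps => 0 < eps < r).
Proof.
  intros Hr; exists (mkposreal r Hr); intros y Hy Hy0; split; [exact Hy0 |].
  unfold ball in Hy; simpl in Hy; unfold AbsRing_ball, abs, minus, plus, opp in Hy; simpl in Hy.
  rewrite Ropp_0, Rplus_0_r, Rabs_pos_eq in Hy by lra; exact Hy.
Qed.

Lemma is_pv_integral_ext (f g : R -> C) (a b c : R) (L : C) : a < c < b ->
  (forall x, a < x < b -> x <> c -> f x = g x) ->
  is_pv_integral f a b c L -> is_pv_integral g a b c L.
Proof.
  intros Hc Hfg; apply filterlim_ext_loc.
  apply (filter_imp (fun eps => 0 < eps < Rmin (c - a) (b - c))); [| apply at_right_0_lt, Rmin_pos; lra].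
  intros eps [He0 He]; pose proof (Rmin_l (c - a) (b - c)); pose proof (Rmin_r (c - a) (b - c)).
  f_equal; apply RInt_ext; intros x Hx;
    rewrite Rmin_left, Rmax_right in Hx by lra; apply Hfg; lra.
Qed.

Lemma is_pv_integral_plus (f g : R -> C) (a b c : R) (Lf Lg : C) :
  at_right 0 (fun eps => ex_RInt f a (c - eps) /\ ex_RInt f (c + eps) b /\
                         ex_RInt g a (c - eps) /\ ex_RInt g (c + eps) b) ->
  is_pv_integral f a b c Lf -> is_pv_integral g a b c Lg ->
  is_pv_integral (fun x => f x + g x)%C a b c (Lf + Lg)%C.
Proof.
  intros Hint Hf Hg; unfold is_pv_integral.
  eapply filterlim_ext_loc;
    [| exact (filterlim_comp_2 _ _ _ Hf Hg (filterlim_plus (V := C_R_NormedModule) Lf Lg))].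
  generalize Hint; apply filter_imp; intros eps (Hf1 & Hf2 & Hg1 & Hg2).
  pose proof (RInt_plus (V := C_R_CompleteNormedModule) f g _ _ Hf1 Hg1) as E1.
  pose proof (RInt_plus (V := C_R_CompleteNormedModule) f g _ _ Hf2 Hg2) as E2.
  change plus with Cplus in E1, E2; rewrite E1, E2; ring_C.
Qed.

Lemma is_pv_integral_continuous (g : R -> C) (a b c : R) : a < c < b ->
  (forall x, continuous g x) -> is_pv_integral g a b c (RInt (V := C_R_CompleteNormedModule) g a b).
Proof.
  intros Hc Hg.
  set (G := (fun x => RInt (V := C_R_CompleteNormedModule) g a x) : R -> C).
  assert (HGc : forall x, continuous G x).
  { intros x; apply (ex_derive_continuous (K := R_AbsRing) (V := C_R_NormedModule)); exists (g x).
    apply is_derive_RInt with a; [| apply Hg].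
    apply filter_forall; intros y; apply (RInt_correct (V := C_R_CompleteNormedModule)).
    apply (ex_RInt_continuous (V := C_R_CompleteNormedModule)); intros; apply Hg. }
  assert (Hsplit : forall x, (RInt (V := C_R_CompleteNormedModule) g x b : C) = (G b - G x)%C).
  { intros x; unfold G; rewrite <- (RInt_Chasles (V := C_R_CompleteNormedModule) g a x b)
      by (apply (ex_RInt_continuous (V := C_R_CompleteNormedModule)); intros; apply Hg).
    ring_C. }
  set (E := fun eps => (G (c - eps)%R + (G b - G (c + eps)%R))%C).
  assert (HE : continuous E 0).
  { assert (Hshift : forall sgn : R, continuous (fun eps => G (c + sgn * eps)) 0).
    { intros sgn; apply (continuous_comp (fun eps => c + sgn * eps) G).
      - apply (ex_derive_continuous (K := R_AbsRing) (V := R_NormedModule)); auto_derive; auto.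
      - apply HGc. }
    apply (continuous_plus (V := C_NormedModule)
             (fun eps => G (c - eps)%R) (fun eps => G b - G (c + eps)%R)%C).
    - apply (continuous_ext (fun eps => G (c + -1 * eps))); [intros; f_equal; ring | apply Hshift].
    - apply (continuous_plus (V := C_NormedModule) (fun _ => G b) (fun eps => - G (c + eps)%R)%C);
        [apply continuous_const |].
      apply (continuous_ext (fun eps : R => RtoC (-1) * G (c + 1 * eps)%R)%C);
        [intros; rewrite Rmult_1_l; ring_C | apply continuous_Cmult_l, Hshift]. }
  apply (filterlim_ext_loc E).
  - apply filter_forall; intros eps; unfold E; rewrite Hsplit; reflexivity.
  - replace (G b) with (E 0) by (unfold E; rewrite Rminus_0_r, Rplus_0_r; ring).
    exact (filterlim_filter_le_1 _ (filter_le_within _) HE).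
Qed.

Lemma sin_PI_sub_neq_0 (t x : R) : 0 < frac_part t -> 0 <= x <= 1 -> x <> frac_part t ->
  sin (PI * (t - x)) <> 0.
Proof.
  intros Hc Hx Hxc E; apply sin_PI_eq_0 in E as [k Hk].
  pose proof (base_Int_part t) as [H1 H2]; unfold frac_part in *.
  assert (Hm : (Int_part t - k = 0)%Z).
  { assert (-1 < IZR (Int_part t - k) < 1) as [Hlo Hhi] by (rewrite minus_IZR; lra).
    apply lt_IZR in Hhi; apply (lt_IZR (-1)) in Hlo; lia. }
  apply Hxc; replace (Int_part t) with k by lia; lra.
Qed.

Definition cot_primitive (t x : R) : R := - ln (sin (PI * (t - x)) ^ 2) / (2 * PI).

Lemma is_RInt_cot (t lo hi : R) : lo <= hi -> (forall x, lo <= x <= hi -> sin (PI * (t - x)) <> 0) ->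
  is_RInt (fun x => cot (PI * (t - x))) lo hi (cot_primitive t hi - cot_primitive t lo).
Proof.
  intros Hlohi Hsin; pose proof PI_RGT_0.
  apply (is_RInt_derive (V := R_CompleteNormedModule) (cot_primitive t)); intros x Hx;
    rewrite Rmin_left, Rmax_right in Hx by lra; specialize (Hsin x Hx); unfold cot_primitive, cot.
  - auto_derive; [apply pow2_gt_0, Hsin |].
    replace (t + - x) with (t - x) by ring; field; lra.
  - apply (ex_derive_continuous (K := R_AbsRing) (V := R_NormedModule)); auto_derive; auto.
Qed.

Lemma sin_sq_shift_PI (y : R) (k : Z) : sin (y + IZR k * PI) ^ 2 = sin y ^ 2.
Proof.
  rewrite sin_plus, (sin_eq_0_1 (IZR k * PI)) by eauto.
  pose proof (sin2_cos2 (IZR k * PI)) as H; rewrite (sin_eq_0_1 (IZR k * PI)) in H by eauto; unfold Rsqr in H.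
  replace ((sin y * cos (IZR k * PI) + cos y * 0) ^ 2)
    with (sin y ^ 2 * (cos (IZR k * PI) * cos (IZR k * PI))) by ring.
  replace (cos (IZR k * PI) * cos (IZR k * PI)) with 1 by lra; ring.
Qed.

(* the primitive is symmetric about the singular point and 1-periodic, so the truncated integrals cancel *)
Lemma is_pv_integral_cot (a : C) (t : R) : 0 < frac_part t ->
  is_pv_integral (fun x => a * RtoC (cot (PI * (t - x))))%C 0 1 (frac_part t) (RtoC 0).
Proof.
  intros Hc; pose proof (base_fp t) as [_ Hc1]; set (c := frac_part t) in *.
  assert (Htc : t - c = IZR (Int_part t)) by (unfold c, frac_part; ring).
  unfold is_pv_integral; eapply filterlim_ext_loc; [| apply filterlim_const].
  apply (filter_imp (fun eps => 0 < eps < Rmin c (1 - c))); [| apply at_right_0_lt, Rmin_pos; lra].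
  intros eps [He0 He]; pose proof (Rmin_l c (1 - c)); pose proof (Rmin_r c (1 - c)).
  assert (HI : forall lo hi, 0 <= lo <= hi -> hi <= 1 -> (hi < c \/ c < lo) ->
            RInt (V := C_R_CompleteNormedModule) (fun x => a * RtoC (cot (PI * (t - x))))%C lo hi
            = (a * RtoC (cot_primitive t hi - cot_primitive t lo))%C).
  { intros lo hi Hlo Hhi Hc'; apply (is_RInt_unique (V := C_R_CompleteNormedModule)).
    apply is_RInt_Cmult_l, is_RInt_RtoC, is_RInt_cot; [lra |].
    intros x Hx; apply sin_PI_sub_neq_0; [exact Hc | lra | fold c; lra]. }
  rewrite (HI 0 (c - eps)), (HI (c + eps) 1) by lra.
  assert (Hsym : cot_primitive t (c - eps) = cot_primitive t (c + eps)).
  { unfold cot_primitive; f_equal; f_equal; f_equal.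
    replace (PI * (t - (c - eps))) with (PI * eps + IZR (Int_part t) * PI) by (rewrite <- Htc; ring).
    replace (PI * (t - (c + eps))) with (- (PI * eps) + IZR (Int_part t) * PI) by (rewrite <- Htc; ring).
    rewrite !sin_sq_shift_PI, sin_neg; ring. }
  assert (Hper : cot_primitive t 0 = cot_primitive t 1).
  { unfold cot_primitive; replace (PI * (t - 1)) with (PI * (t - 0) + IZR (-1) * PI) by (simpl; ring).
    rewrite sin_sq_shift_PI; reflexivity. }
  rewrite Hsym, Hper, !RtoC_minus; ring_C.
Qed.

Lemma is_pv_integral_cot_plus (a : C) (g : R -> C) (t : R) : 0 < frac_part t ->
  (forall x, continuous g x) ->
  is_pv_integral (fun x => a * RtoC (cot (PI * (t - x))) + g x)%C 0 1 (frac_part t)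
                 (RInt (V := C_R_CompleteNormedModule) g 0 1).
Proof.
  intros Hc Hg; pose proof (base_fp t) as [_ Hc1]; set (c := frac_part t) in *.
  replace (RInt (V := C_R_CompleteNormedModule) g 0 1)
    with (RtoC 0 + RInt (V := C_R_CompleteNormedModule) g 0 1)%C
    by ring_C.
  apply is_pv_integral_plus;
    [| apply is_pv_integral_cot, Hc | apply is_pv_integral_continuous; [lra | exact Hg]].
  apply (filter_imp (fun eps => 0 < eps < Rmin c (1 - c))); [| apply at_right_0_lt, Rmin_pos; lra].
  intros eps [He0 He]; pose proof (Rmin_l c (1 - c)); pose proof (Rmin_r c (1 - c)).
  assert (Hcot : forall lo hi, 0 <= lo <= hi -> hi <= 1 -> (hi < c \/ c < lo) ->
            ex_RInt (V := C_R_CompleteNormedModule) (fun x => a * RtoC (cot (PI * (t - x))))%C lo hi).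
  { intros lo hi Hlo Hhi Hc'; eexists; apply is_RInt_Cmult_l, is_RInt_RtoC, is_RInt_cot; [lra |].
    intros x Hx; apply sin_PI_sub_neq_0; [exact Hc | lra | fold c; lra]. }
  assert (Hcont : forall lo hi, ex_RInt (V := C_R_CompleteNormedModule) g lo hi)
    by (intros; apply (ex_RInt_continuous (V := C_R_CompleteNormedModule)); intros; apply Hg).
  repeat split; auto; apply Hcot; lra.
Qed.

Lemma frac_part_pos (t : R) : (forall k : Z, t <> IZR k) -> 0 < frac_part t.
Proof.
  intros Ht; destruct (base_fp t) as [Hc0 _]; apply Rnot_le_lt; intros Hc.
  apply (Ht (Int_part t)); unfold frac_part in *; lra.
Qed.

Lemma Z_sign_abs (n : Z) :
  exists (s : Z) (p : nat), (s = 1 \/ s = -1)%Z /\ n = (s * Z.of_nat p)%Z /\ Z.abs n = Z.of_nat p.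
Proof. exists (if (0 <=? n)%Z then 1%Z else (-1)%Z), (Z.abs_nat n); destruct (Z.leb_spec 0 n); lia. Qed.

Lemma is_pv_integral_cot_mul_e (s : Z) (p : nat) (t : R) : (s = 1 \/ s = -1)%Z -> 0 < frac_part t ->
  is_pv_integral (fun x => RtoC (cot (PI * (t - x))) * e_ (s * Z.of_nat p) x)%C 0 1 (frac_part t)
    (- Ci * RtoC (IZR s) * (if (p =? 0)%nat then RtoC 0 else e_ (s * Z.of_nat p) t))%C.
Proof.
  intros Hs Hc; pose proof (base_fp t).
  set (K := (- Ci * RtoC (IZR s))%C).
  apply (is_pv_integral_ext
           (fun x => e_ (s * Z.of_nat p) t * RtoC (cot (PI * (t - x))) + K * cot_poly s t p x)%C);
    [lra | intros x Hx Hxc; symmetry; apply cot_mul_e, sin_PI_sub_neq_0; auto; lra |].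
  replace (K * _)%C with (RInt (V := C_R_CompleteNormedModule) (fun x => K * cot_poly s t p x)%C 0 1).
  - apply is_pv_integral_cot_plus; [exact Hc | intros x; apply continuous_Cmult_l, continuous_cot_poly].
  - apply (is_RInt_unique (V := C_R_CompleteNormedModule)), is_RInt_Cmult_l, is_RInt_cot_poly; lia.
Qed.

Lemma grid_avg_cot_mul_e (N : nat) (s : Z) (p : nat) (t : R) : (s = 1 \/ s = -1)%Z -> (0 < N)%nat ->
  (p < N)%nat -> (forall k : Z, t * INR N <> IZR k) ->
  grid_avg N (fun x => RtoC (cot (PI * (t - x))) * e_ (s * Z.of_nat p) x)%C
  = (e_ (s * Z.of_nat p) t * RtoC (cot (PI * (t * INR N)))
     + - Ci * RtoC (IZR s) * (if (p =? 0)%nat then RtoC 0 else e_ (s * Z.of_nat p) t))%C.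
Proof.
  intros Hs HN HpN Ht.
  rewrite (grid_avg_ext N _ (fun x => e_ (s * Z.of_nat p) t * RtoC (cot (PI * (t - x)))
                                     + - Ci * RtoC (IZR s) * cot_poly s t p x)%C)
    by (intros j; apply cot_mul_e, sin_PI_sub_grid_neq_0; auto).
  rewrite grid_avg_plus, !grid_avg_Cmult_l, grid_avg_cot, grid_avg_cot_poly by (auto; lia).
  destruct (Nat.eqb_spec p N); [lia | ring].
Qed.

Theorem lemmaB2 (N : nat) (HN : (0 < N)%nat) (n : Z) (t : R) :
  let h := / INR N in
  (Z.abs n <= Z.of_nat N - 1)%Z ->
  (forall k : Z, t / h <> IZR k) ->
  exists pv : C,
    is_pv_integral (fun tau => RtoC (cot (PI * (t - tau))) * e_ n tau)%C
                   0 1 (frac_part t) pv /\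
    (RtoC h * sum_n_m (fun j => RtoC (cot (PI * (t - INR j * h))) * e_ n (INR j * h)) 1 N)%C
    = (pv + RtoC (cot (PI * t / h)) * e_ n t)%C.
Proof.
  intros h Hn Ht; pose proof (lt_0_INR N HN) as HNpos.
  assert (HtN : forall k : Z, t * INR N <> IZR k)
    by (intros k E; apply (Ht k); rewrite <- E; unfold h; field; lra).
  assert (Hc : 0 < frac_part t).
  { apply frac_part_pos; intros k E; apply (HtN (k * Z.of_nat N)%Z).
    rewrite mult_IZR, <- INR_IZR_INZ, E; reflexivity. }
  destruct (Z_sign_abs n) as (s & p & Hs & -> & Hp).
  eexists; split; [apply is_pv_integral_cot_mul_e; auto |].
  change (RtoC h * _)%C with (grid_avg N (fun x => RtoC (cot (PI * (t - x))) * e_ (s * Z.of_nat p) x)%C).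
  rewrite grid_avg_cot_mul_e by (auto; lia).
  replace (PI * t / h) with (PI * (t * INR N)) by (unfold h; field; lra); ring.
Qed.
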